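(* (a) Let $(\mathbb{L},\Box,\Diamond)$ be an $\mathcal{L}$-algebra. If $i:\mathbb{L}\to\mathbf{A}$ is an $\mathbf{A}$-ideal, then so is $i^{-\Box}$. (b) If $i:\mathbf{Fm}\to\mathbf{A}$ is a proper $\mathbf{A}$-ideal of the Lindenbaum–Tarski algebra $\mathbf{Fm}$, then so is $i^{-\Box}$.
   Context: $\mathbf{A}=(D,1,0,\vee,\wedge,\otimes,\to)$ is a fixed complete lattice with top $1$ and bottom $0$, frame-distributive and dually frame-distributive, with a commutative associative $\otimes$ residuated by $\to$, and $1\to\alpha=\alpha$ for all $\alpha$. An $\mathcal{L}$-algebra $(\mathbb{L},\Box,\Diamond)$ is a bounded lattice with unary $\Box$ preserving finite meets ($\Box\top=\top$, $\Box(a\wedge b)=\Box a\wedge\Box b$) and unary $\Diamond$ preserving finite joins ($\Diamond\bot=\bot$, $\Diamond(a\vee b)=\Diamond a\vee\Diamond b$). An $\mathbf{A}$-ideal of $\mathbb{L}$ is $i:\mathbb{L}\to\mathbf{A}$ with $i(\bot)=1$ and $i(a\vee b)=i(a)\wedge i(b)$ for all $a,b$; it is proper if moreover $i(\top)=0$. For $k:\mathbb{L}\to\mathbf{A}$, $k^{-\Box}(a)=\bigvee\{k(b)\mid a\le\Box b\}$. $\mathcal{L}$: $\varphi::=\bot\mid\top\mid p\mid\varphi\wedge\varphi\mid\varphi\vee\varphi\mid\Box\varphi\mid\Diamond\varphi$ over a countable set of atoms. $\mathbf{L}$ is the least set of sequents containing $p\vdash p$, $\bot\vdash p$, $p\vdash\top$,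 $p\vdash p\vee q$, $q\vdash p\vee q$, $p\wedge q\vdash p$, $p\wedge q\vdash q$, $\top\vdash\Box\top$, $\Box p\wedge\Box q\vdash\Box(p\wedge q)$, $\Diamond\bot\vdash\bot$, $\Diamond(p\vee q)\vdash\Diamond p\vee\Diamond q$ and closed under cut, uniform substitution, from $\chi\vdash\phi,\chi\vdash\psi$ infer $\chi\vdash\phi\wedge\psi$, from $\phi\vdash\chi,\psi\vdash\chi$ infer $\phi\vee\psi\vdash\chi$, and from $\phi\vdash\psi$ infer $\Box\phi\vdash\Box\psi$ and $\Diamond\phi\vdash\Diamond\psi$. $\mathbf{Fm}$ is the Lindenbaum–Tarski algebra of $\mathcal{L}$-formulas modulo $\mathbf{L}$ (ordered by derivability), which is an $\mathcal{L}$-algebra. *)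

From HB Require Import structures.
From mathcomp Require Import all_boot all_order.
Set Implicit Arguments. Unset Strict Implicit. Unset Printing Implicit Defensive.
Import Order.TTheory.
Local Open Scope order_scope.

Record CAlg := {
  car :> Type;
  ale : car -> car -> Prop;
  aone : car;
  azero : car;
  ajoin : car -> car -> car;
  ameet : car -> car -> car;
  asup : (car -> Prop) -> car;
  ainf : (car -> Prop) -> car;
  atensor : car -> car -> car;
  aimpl : car -> car -> car;
  ale_refl : forall a, ale a a;
  ale_antisym : forall a b, ale a b -> ale b a -> a = b;
  ale_trans : forall a b c, ale a b -> ale b c -> ale a c;
  aone_top : forall a, ale a aone;
  azero_bot : forall a, ale azero a;
  ajoin_lub : forall a b c, ale (ajoin a b) c <-> (ale a c /\ ale b c);
  ameet_glb : forall a b c, ale c (ameet a b) <-> (ale c a /\ ale c b);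
  asup_ub : forall (S : car -> Prop) a, S a -> ale a (asup S);
  asup_least : forall (S : car -> Prop) c, (forall a, S a -> ale a c) -> ale (asup S) c;
  ainf_lb : forall (S : car -> Prop) a, S a -> ale (ainf S) a;
  ainf_greatest : forall (S : car -> Prop) c, (forall a, S a -> ale c a) -> ale c (ainf S);
  frame_distr : forall a (S : car -> Prop),
    ameet a (asup S) = asup (fun x => exists2 s, S s & x = ameet a s);
  dual_frame_distr : forall a (S : car -> Prop),
    ajoin a (ainf S) = ainf (fun x => exists2 s, S s & x = ajoin a s);
  atensorC : forall a b, atensor a b = atensor b a;
  atensorA : forall a b c, atensor a (atensor b c) = atensor (atensor a b) c;
  aresid : forall a b c, ale (atensor a b) c <-> ale a (aimpl b c);
  aimpl_one : forall a, aimpl aone a = a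
}.

Definition is_LAlgebra (d : Order.disp_t) (L : tbLatticeType d)
  (box dia : L -> L) : Prop :=
  [/\ box \top = \top,
      (forall a b, box (a `&` b) = box a `&` box b),
      dia \bot = \bot &
      (forall a b, dia (a `|` b) = dia a `|` dia b)].

Definition is_Aideal (A : CAlg) (d : Order.disp_t) (L : tbLatticeType d)
  (i : L -> A) : Prop :=
  i \bot = aone A /\ (forall a b, i (a `|` b) = ameet (i a) (i b)).

Definition minus_box (A : CAlg) (d : Order.disp_t) (L : tbLatticeType d)
  (box : L -> L) (k : L -> A) : L -> A :=
  fun a => asup (fun x => exists2 b, a <= box b & x = k b).

Inductive form : Type :=
  | FBot | FTop | FVar of nat
  | FAnd of form & form | FOr of form & form
  | FBox of form | FDia of form.

Fixpoint subst (s : nat -> form) (f : form) : form :=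
  match f with
  | FBot => FBot | FTop => FTop | FVar n => s n
  | FAnd f g => FAnd (subst s f) (subst s g)
  | FOr f g => FOr (subst s f) (subst s g)
  | FBox f => FBox (subst s f)
  | FDia f => FDia (subst s f)
  end.

Notation pp := (FVar 0).
Notation qq := (FVar 1).

(* der f g  :=  the sequent  f |- g  belongs to the logic L *)
Inductive der : form -> form -> Prop :=
  | ax_id : der pp pp
  | ax_bot : der FBot pp
  | ax_top : der pp FTop
  | ax_orl : der pp (FOr pp qq)
  | ax_orr : der qq (FOr pp qq)
  | ax_andl : der (FAnd pp qq) pp
  | ax_andr : der (FAnd pp qq) qq
  | ax_boxtop : der FTop (FBox FTop)
  | ax_boxand : der (FAnd (FBox pp) (FBox qq)) (FBox (FAnd pp qq))
  | ax_diabot : der (FDia FBot) FBot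
  | ax_diaor : der (FDia (FOr pp qq)) (FOr (FDia pp) (FDia qq))
  | r_cut : forall f g h, der f g -> der g h -> der f h
  | r_subst : forall s f g, der f g -> der (subst s f) (subst s g)
  | r_and : forall c f g, der c f -> der c g -> der c (FAnd f g)
  | r_or : forall f g c, der f c -> der g c -> der (FOr f g) c
  | r_box : forall f g, der f g -> der (FBox f) (FBox g)
  | r_dia : forall f g, der f g -> der (FDia f) (FDia g).

(* Maps out of Fm are represented as maps on formulas that are invariant under
   inter-derivability (i.e. that factor through the quotient Fm). In Fm,
   [f] <= [g] iff der f g, bottom is [FBot], top is [FTop], [f] v [g] = [FOr f g],
   box [f] = [FBox f]. *)
Definition Fm_map (A : CAlg) (i : form -> A) : Prop :=
  forall f g, der f g -> der g f -> i f = i g.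

Definition is_Fm_proper_Aideal (A : CAlg) (i : form -> A) : Prop :=
  [/\ Fm_map i,
      i FBot = aone A,
      (forall f g, i (FOr f g) = ameet (i f) (i g)) &
      i FTop = azero A].

Definition Fm_minus_box (A : CAlg) (k : form -> A) : form -> A :=
  fun f => asup (fun x => exists2 g, der f (FBox g) & x = k g).

From mathcomp Require Import all_boot all_order.
Set Implicit Arguments. Unset Strict Implicit. Unset Printing Implicit Defensive.
Import Order.TTheory.
Local Open Scope order_scope.

(* Both parts are one argument about a preorder with binary joins, a least
   element and a monotone box.  Antitonicity of k^{-box} gives
   i^{-box}(a v c) <= i^{-box}(a) /\ i^{-box}(c).  Conversely, frame
   distributivity reduces the other inequality to pairs b1, b2 with
   a <= box b1 and c <= box b2; then a v c <= box (b1 v b2) and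
   i (b1 v b2) = i b1 /\ i b2.  Properness in Fm needs that top |- box g forces
   top |- g: the logic is sound for the one-point model reading box g as
   "top |- g". *)

Section CompleteAlgebra.
Variable A : CAlg.

Lemma ameetC (a b : A) : ameet a b = ameet b a.
Proof.
have meet_swap (x y : A) : ale (ameet x y) (ameet y x).
  by have /ameet_glb[lex ley] := ale_refl (ameet x y); apply/ameet_glb.
by apply: ale_antisym; apply: meet_swap.
Qed.

Lemma ameet_asup_le (S1 S2 T : A -> Prop) :
  (forall x y, S1 x -> S2 y -> T (ameet x y)) ->
  ale (ameet (asup S1) (asup S2)) (asup T).
Proof.
move=> ST; rewrite frame_distr; apply: asup_least => _ [y S2y ->].
rewrite ameetC frame_distr; apply: asup_least => _ [x S1x ->].
by rewrite ameetC; apply: asup_ub; apply: ST.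
Qed.

End CompleteAlgebra.

Section MinusBox.
Variables (A : CAlg) (T : Type) (le : T -> T -> Prop).
Variables (join : T -> T -> T) (bot : T) (box : T -> T).
Hypothesis le_transT : forall a b c, le a b -> le b c -> le a c.
Hypothesis le_joinl : forall a b, le a (join a b).
Hypothesis le_joinr : forall a b, le b (join a b).
Hypothesis join_least : forall a b c, le a c -> le b c -> le (join a b) c.
Hypothesis bot_le : forall a, le bot a.
Hypothesis box_mono : forall a b, le a b -> le (box a) (box b).

Definition minus_box_gen (k : T -> A) (a : T) : A :=
  asup (fun x => exists2 b, le a (box b) & x = k b).

Lemma minus_box_gen_anti k a c :
  le a c -> ale (minus_box_gen k c) (minus_box_gen k a).
Proof.
move=> le_ac; apply: asup_least => _ [b le_cb ->].
by apply: asup_ub; exists b => //; apply: le_transT le_cb.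
Qed.

Variable i : T -> A.
Hypothesis i_bot : i bot = aone A.
Hypothesis i_join : forall a b, i (join a b) = ameet (i a) (i b).

Lemma minus_box_gen_bot : minus_box_gen i bot = aone A.
Proof. by apply: ale_antisym; [apply: aone_top | apply: asup_ub; exists bot]. Qed.

Lemma minus_box_gen_join a c :
  minus_box_gen i (join a c) = ameet (minus_box_gen i a) (minus_box_gen i c).
Proof.
apply: ale_antisym.
  by apply/ameet_glb; split; apply: minus_box_gen_anti.
apply: ameet_asup_le => _ _ [b1 le_ab1 ->] [b2 le_cb2 ->].
exists (join b1 b2); last by rewrite i_join.
by apply: join_least; [apply: le_transT le_ab1 _ | apply: le_transT le_cb2 _];
  apply: box_mono.
Qed.

End MinusBox.

Lemma LAlgebra_box_mono d (L : tbLatticeType d) (box dia : L -> L) :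
  is_LAlgebra box dia -> {homo box : a b / a <= b}.
Proof.
by case=> _ box_meet _ _ a b /meet_idPl ab; apply/meet_idPl; rewrite -box_meet ab.
Qed.

Lemma minus_boxE (A : CAlg) d (L : tbLatticeType d) (box : L -> L) (k : L -> A) :
  minus_box box k = minus_box_gen (fun a b => a <= b) box k.
Proof. by []. Qed.

Lemma is_Aideal_minus_box (A : CAlg) d (L : tbLatticeType d) (box : L -> L)
    (i : L -> A) :
  {homo box : a b / a <= b} -> is_Aideal i -> is_Aideal (minus_box box i).
Proof.
move=> box_mono [i_bot i_join]; rewrite minus_boxE; split.
  by apply: minus_box_gen_bot => // a; apply: le0x.
by apply: minus_box_gen_join => // [a b c|a b|a b|a b c ac bc];
  [apply: le_trans | apply: leUl | apply: leUr | rewrite leUx ac bc].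
Qed.

Lemma subst_comp s1 s2 f :
  subst s2 (subst s1 f) = subst (fun n => subst s2 (s1 n)) f.
Proof. by elim: f => //= [f -> g -> | f -> g -> | f -> | f ->]. Qed.

Lemma subst_var f : subst FVar f = f.
Proof. by elim: f => //= [f -> g -> | f -> g -> | f -> | f ->]. Qed.

Definition subst2 (f g : form) (n : nat) : form :=
  match n with 0 => f | 1 => g | _ => FVar n end.

Lemma der_refl f : der f f.
Proof. exact: (r_subst (subst2 f f) ax_id). Qed.

Lemma der_bot f : der FBot f.
Proof. exact: (r_subst (subst2 f f) ax_bot). Qed.

Lemma der_top f : der f FTop.
Proof. exact: (r_subst (subst2 f f) ax_top). Qed.

Lemma der_orl f g : der f (FOr f g).
Proof. exact: (r_subst (subst2 f g) ax_orl). Qed.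

Lemma der_orr f g : der g (FOr f g).
Proof. exact: (r_subst (subst2 f g) ax_orr). Qed.

Fixpoint truth (f : form) : Prop :=
  match f with
  | FBot => False
  | FTop | FVar _ => True
  | FAnd f g => truth f /\ truth g
  | FOr f g => truth f \/ truth g
  | FBox f => der FTop f
  | FDia f => truth f
  end.

Lemma der_truth f g : der f g -> forall s, truth (subst s f) -> truth (subst s g).
Proof.
elim=> //=; try tauto.
- by move=> *; apply: der_refl.
- by move=> s [top_p top_q]; apply: r_and.
- by move=> f0 g0 h0 _ IH1 _ IH2 s /IH1/IH2.
- by move=> s0 f0 g0 _ IH s; rewrite !subst_comp; apply: IH.
- by move=> c0 f0 g0 _ IH1 _ IH2 s t; split; [apply: IH1 | apply: IH2].
- by move=> f0 g0 c0 _ IH1 _ IH2 s [/IH1 | /IH2].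
- by move=> f0 g0 fg _ s top_f; apply: r_cut top_f (r_subst s fg).
Qed.

Lemma der_top_box g : der FTop (FBox g) -> der FTop g.
Proof. by move/der_truth/(_ FVar); rewrite /= subst_var; apply. Qed.

Lemma Fm_minus_boxE (A : CAlg) (k : form -> A) :
  Fm_minus_box k = minus_box_gen der FBox k.
Proof. by []. Qed.

Lemma is_Fm_proper_Aideal_minus_box (A : CAlg) (i : form -> A) :
  is_Fm_proper_Aideal i -> is_Fm_proper_Aideal (Fm_minus_box i).
Proof.
case=> i_map i_bot i_or i_top; rewrite Fm_minus_boxE; split.
- by move=> f g fg gf; apply: ale_antisym; apply: (minus_box_gen_anti FBox r_cut).
- exact (minus_box_gen_bot FBox der_bot i_bot).
- exact (minus_box_gen_join r_cut der_orl der_orr r_or r_box i_or).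
- apply: ale_antisym; last exact: azero_bot.
  apply: asup_least => _ [g /der_top_box top_g ->].
  by rewrite -i_top (i_map g FTop (der_top g) top_g); apply: ale_refl.
Qed.

Theorem mainTheorem6 (A : CAlg) :
  (forall (d : Order.disp_t) (L : tbLatticeType d) (box dia : L -> L),
      is_LAlgebra box dia ->
      forall i : L -> A, is_Aideal i -> is_Aideal (minus_box box i)) /\
  (forall i : form -> A,
      is_Fm_proper_Aideal i -> is_Fm_proper_Aideal (Fm_minus_box i)).
Proof.
split; last exact: is_Fm_proper_Aideal_minus_box.
by move=> d L box dia /LAlgebra_box_mono box_mono i; apply: is_Aideal_minus_box.
Qed.
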